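(* Let $\Gamma$ be a finite connected graph with vertex set $\mathcal{V}$ and Laplacian matrix $L = D - A$ (where $A$ is the adjacency matrix and $D$ the diagonal matrix of vertex degrees). Fix a prime $p$, and for each integer $i \ge 0$ let $e_i$ be the number of invariant factors of $L$ (i.e., diagonal entries of the Smith normal form of $L$ over $\mathbb{Z}$) that are divisible by $p^i$ but not by $p^{i+1}$. Let $\eta$ be an eigenvalue of $L$ with multiplicity $m$, and assume $\eta$ is an integer. Then: (1) if $p^i \mid \eta$, then $m \le 1 + \sum_{j \ge i} e_j$; (2) if $p^i \parallel \eta$ (that is, $p^i \mid \eta$ and $p^{i+1} \nmid \eta$), then $m \le \sum_{0 \le j \le i} e_j$.
   Context: The Smith normal form of an integer matrix $L$ is the unique diagonal matrix $\mathrm{diag}(s_1,\dots,s_v)$ with nonnegative entries, $s_i \mid s_{i+1}$, such that $ULV = \mathrm{diag}(s_1,\dots,s_v)$ for some unimodular integer matrices $U,V$; the $s_i$ are the invariant factors. For a connected graph exactly one invariant factor of $L$ is $0$. *)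

From mathcomp Require Import all_boot all_order all_algebra.
Set Implicit Arguments. Unset Strict Implicit. Unset Printing Implicit Defensive.
Import Order.TTheory GRing.Theory Num.Theory.
Local Open Scope ring_scope.

Definition simple_graph n (adj : rel 'I_n) : Prop :=
  symmetric adj /\ irreflexive adj.

Definition connected_graph n (adj : rel 'I_n) : Prop :=
  forall x y : 'I_n, connect adj x y.

Definition laplacian n (adj : rel 'I_n) : 'M[int]_n :=
  \matrix_(i, j)
    ((if i == j then (#|[set k | adj i k]|)%:Z else 0) - (adj i j : nat)%:Z).

Definition is_Smith_form n (L : 'M[int]_n) (d : 'I_n -> int) : Prop :=
  (forall k, 0 <= d k) /\
  (forall k l : 'I_n, (k <= l)%N -> (d k %| d l)%Z) /\
  exists U V : 'M[int]_n,
    [/\ U \in unitmx, V \in unitmx & U *m L *m V = diag_mx (\row_k d k)].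

Definition e_count n (d : 'I_n -> int) (p i : nat) : nat :=
  #|[set k : 'I_n | ((p ^ i)%:Z %| d k)%Z && ~~ ((p ^ i.+1)%:Z %| d k)%Z]|.

(* A bound beyond which all e_j vanish (for p >= 2): valuations of the nonzero
   invariant factors are < sum_k |d k| + 1. So the sum over j >= i is this
   finite sum. *)
Definition e_bound n (d : 'I_n -> int) : nat := (\sum_k `|d k|%N).+1.

Definition eig_mult n (L : 'M[int]_n) (eta : int) : nat :=
  mup (eta%:~R : rat) (char_poly (map_mx (intr : int -> rat) L)).

From mathcomp Require Import all_boot all_order all_algebra.
From mathcomp Require Import ring zify.
Set Implicit Arguments. Unset Strict Implicit. Unset Printing Implicit Defensive.
Import Order.TTheory GRing.Theory Num.Theory.
Local Open Scope ring_scope.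

(* The Smith form of [L - eta] yields a unimodular integer matrix [W] whose rows
   in a set [Z] are left eta-eigenvectors of [L] spanning the eigenspace; as [L]
   is symmetric, [#|Z|] is at least the multiplicity of [eta].  If
   [U L V = diag d], every such row [x] satisfies [(x U^-1)_j d_j = eta (x V)_j].
   When [p^i | eta], the entries [(x U^-1)_j] with [p^i] not dividing [d_j] are
   divisible by [p]; when [p^i] exactly divides [eta], so are the entries
   [(x V)_j] with [p^(i+1) | d_j].  Rows of a unimodular matrix remain
   independent modulo [p], so [#|Z|] is at most the number of remaining columns:
   [1 + sum_(j >= i) e_j] (connectedness allows at most one [d_j = 0]), resp.
   [sum_(j <= i) e_j]. *)

Lemma mxrank_le_support (F : fieldType) m n (A : 'M[F]_(m, n)) (S : {set 'I_n}) :
  (forall r j, j \notin S -> A r j = 0) -> (\rank A <= #|S|)%N.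
Proof.
move=> A_supp; pose f (i : 'I_#|S|) := enum_val i.
suff -> : A = colsub f A *m rowsub f 1%:M.
  exact: leq_trans (mxrankM_maxl _ _) (rank_leq_col _).
apply/matrixP => r j; rewrite !mxE.
have [jS | jNS] := boolP (j \in S); last first.
  rewrite A_supp // big1 // => i _; rewrite !mxE.
  by case: eqP => [fij | _]; rewrite ?mulr0 //; rewrite -fij enum_valP in jNS.
rewrite (bigD1 (enum_rank_in jS j)) //= !mxE /f enum_rankK_in // eqxx mulr1.
rewrite big1 ?addr0 // => i ne_i; rewrite !mxE.
case: eqP => [fij | _]; rewrite ?mulr0 //.
by move: ne_i; rewrite -{2}fij /f enum_valK_in eqxx.
Qed.

Lemma row_free_rowsub (F : fieldType) m m' n (f : 'I_m' -> 'I_m) (A : 'M[F]_(m, n)) :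
  injective f -> row_free A -> row_free (rowsub f A).
Proof.
move=> f_inj /row_freeP [B AB]; apply/row_freeP; exists (B *m colsub f 1%:M).
rewrite mulmxA mul_rowsub_mx AB mulmx_colsub mulmx1.
by apply/matrixP => i j; rewrite !mxE (inj_eq f_inj).
Qed.

Lemma mulmx_tr_row_eq0 (R : realFieldType) n (w : 'rV[R]_n) :
  w *m w^T = 0 -> w = 0.
Proof.
move=> /matrixP /(_ 0 0); rewrite !mxE => /eqP; rewrite psumr_eq0 => [/allP w0|].
  apply/rowP => j; rewrite mxE; have := w0 j (mem_index_enum j).
  by rewrite implyTb mxE -expr2 sqrf_eq0 => /eqP.
by move=> j _; rewrite mxE -expr2 sqr_ge0.
Qed.

Lemma char_poly_similar (F : fieldType) m n (e : m = n) (P : 'M[F]_(m, n))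
    (A : 'M_n) (B : 'M_m) :
  row_free P -> P *m A = B *m P -> char_poly A = char_poly B.
Proof.
case: n / e in P A *; rewrite row_free_unit => Pu PAB.
have PcharA : map_mx polyC P *m char_poly_mx A = char_poly_mx B *m map_mx polyC P.
  rewrite /char_poly_mx mulmxBr mulmxBl mul_mx_scalar mul_scalar_mx.
  by rewrite -!map_mxM PAB.
have := congr1 determinant PcharA; rewrite !det_mulmx [RHS]mulrC.
by apply: mulfI; rewrite det_map_mx polyC_eq0 -unitfE -unitmxE.
Qed.

Section SymmetricEigenspace.
Variables (R : realFieldType) (n : nat) (A : 'M[R]_n) (a : R).
Hypothesis symA : A^T = A.

Let K := row_base (eigenspace A a).
Let C := row_base (kermx K^T).

Let KA : K *m A = a *: K.
Proof. by apply/eigenspaceP; rewrite eq_row_base submx_refl. Qed.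

Let CK : C *m K^T = 0.
Proof. by apply/eqP; rewrite -sub_kermx eq_row_base submx_refl. Qed.

Let K_C_eq0 (w : 'rV_n) : (w <= K)%MS -> (w <= C)%MS -> w = 0.
Proof.
move=> /submxP [u ->]; rewrite eq_row_base sub_kermx => /eqP uKK.
by apply: mulmx_tr_row_eq0; rewrite trmx_mul mulmxA uKK mul0mx.
Qed.

Let C_stable : (C *m A <= C)%MS.
Proof.
have AK : A *m K^T = (K *m A)^T by rewrite [RHS]trmx_mul symA.
rewrite eq_row_base sub_kermx -mulmxA AK KA linearZ /=.
by rewrite -scalemxAr CK scaler0.
Qed.

(* [A] is similar to [diag(a I, B)], where [B] is the restriction of [A] to the
   orthogonal complement [C] of the eigenspace, and [a] is no eigenvalue of [B]. *)
Lemma mup_char_poly_le_rank_eigenspace :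
  (mup a (char_poly A) <= \rank (eigenspace A a))%N.
Proof.
pose B := C *m A *m pinvmx C.
have CAB : C *m A = B *m C by rewrite mulmxKpV ?C_stable.
have rk : (\rank (eigenspace A a) + \rank (kermx K^T) = n)%N.
  by rewrite mxrank_ker mxrank_tr eq_row_base subnKC // rank_leq_col.
have KCfree : row_free (col_mx K C).
  have KC0 : (K :&: C)%MS = 0.
    apply/eqP; rewrite -submx0; apply/rV_subP => v; rewrite sub_capmx.
    by case/andP => vK vC; rewrite (K_C_eq0 vK vC) sub0mx.
  by rewrite /row_free -addsmxE mxrank_disjoint_sum // !eq_row_base.
have similarKC :
    col_mx K C *m A = block_mx (a%:M : 'M_(\rank (eigenspace A a))) 0 0 B *m col_mx K C.
  by rewrite mul_col_mx mul_block_col KA CAB mul_scalar_mx !mul0mx addr0 add0r.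
have aNrootB : ~~ root (char_poly B) a.
  rewrite -eigenvalue_root_char; apply/eigenvalueP => -[v vB vn0].
  have vCA : v *m C *m A = a *: (v *m C) by rewrite -mulmxA CAB mulmxA vB scalemxAl.
  have vC0 : v *m C = 0.
    by apply: K_C_eq0; [rewrite eq_row_base; exact/eigenspaceP | exact: submxMl].
  by move/eqP: vC0; rewrite mulmx_free_eq0 ?row_base_free // (negbTE vn0).
rewrite (char_poly_similar rk KCfree similarKC) /char_poly char_block_diag_mx.
rewrite det_ublock -/(char_poly _) -/(char_poly _) mupM ?monic_neq0 ?char_poly_monic //.
rewrite (char_poly_trig (scalar_mx_is_trig _ _)).
under eq_bigr do rewrite mxE eqxx mulr1n.
by rewrite prodr_const card_ord mup_XsubCX eqxx mupNroot ?addn0.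
Qed.

End SymmetricEigenspace.

Lemma map_unitmx_rmorph (R S : comUnitRingType) (f : {rmorphism R -> S}) n
    (W : 'M[R]_n) :
  W \in unitmx -> map_mx f W \in unitmx.
Proof. by rewrite !unitmxE det_map_mx; apply: rmorph_unit. Qed.

(* Reduction modulo [p] keeps the [Z]-rows of a unimodular matrix independent. *)
Lemma card_rows_le_support_modp p n (W : 'M[int]_n) (Z S : {set 'I_n}) :
  prime p -> W \in unitmx ->
  (forall r j, r \in Z -> j \notin S -> (p%:Z %| W r j)%Z) -> (#|Z| <= #|S|)%N.
Proof.
move=> p_pr Wu W_supp; pose Wp := map_mx (intr : int -> 'F_p) W.
have WZfree : row_free (rowsub (fun i : 'I_#|Z| => enum_val i) Wp).
  by rewrite row_free_rowsub ?row_free_unit ?map_unitmx_rmorph //; exact: enum_val_inj.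
rewrite -(eqP WZfree); apply: mxrank_le_support => r j jNS.
rewrite !mxE; have /dvdzP [q ->] := W_supp _ _ (enum_valP r) jNS.
by rewrite intrM -natz rmorph_nat pchar_Fp_0 // mulr0.
Qed.

Lemma unimodular_left_kernel_basis n (M : 'M[int]_n) :
  exists2 W : 'M[int]_n, W \in unitmx & exists Z : {set 'I_n},
    (forall k, k \in Z -> row k W *m M = 0) /\
    (\rank (kermx (map_mx (intr : int -> rat) M)) <= #|Z|)%N.
Proof.
have [P Pu [Q Qu [c _ M_Smith]]] := int_Smith_normal_form M.
have {}M_Smith : M = P *m diag_mx (\row_k c`_k) *m Q.
  by rewrite M_Smith; congr (_ *m _ *m _); apply/matrixP => i j; rewrite !mxE.
exists (invmx P); first by rewrite unitmx_inv.
exists [set k : 'I_n | c`_k == 0]; split => [k | ].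
  rewrite inE => /eqP ck; rewrite M_Smith -row_mul !mulmxA mulVmx // mul1mx.
  by rewrite row_mul row_diag_mx mxE ck scale0r mul0mx.
set Ker := kermx _.
have Pfree : row_free (map_mx intr P : 'M[rat]_n).
  by rewrite row_free_unit map_unitmx_rmorph.
rewrite -(mxrankMfree Ker Pfree); apply: mxrank_le_support => r j.
rewrite inE => ncj.
have : Ker *m map_mx intr M = 0 by apply/eqP; rewrite -sub_kermx submx_refl.
rewrite M_Smith !map_mxM !mulmxA.
move/(congr1 (mulmx^~ (invmx (map_mx intr Q)))).
rewrite mulmxK ?map_unitmx_rmorph // mul0mx map_diag_mx.
move/matrixP => /(_ r j); rewrite mul_mx_diag !mxE => /eqP.
by rewrite mulf_eq0 intr_eq0 (negbTE ncj) orbF => /eqP.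
Qed.

Lemma Smith_eigenrow (R : comUnitRingType) n (L U V : 'M[R]_n) (d : 'rV[R]_n)
    (x : 'rV[R]_n) (eta : R) j :
  U \in unitmx -> U *m L *m V = diag_mx d -> x *m L = eta *: x ->
  (x *m invmx U) 0 j * d 0 j = eta * (x *m V) 0 j.
Proof.
move=> Uu ULV xL.
have : x *m invmx U *m diag_mx d = eta *: (x *m V).
  by rewrite -ULV !mulmxA mulmxKV // xL scalemxAl.
by move/matrixP => /(_ 0 j); rewrite mul_mx_diag !mxE.
Qed.

Lemma prime_dvdz_of_dvdz_mul p i (a b : int) : prime p ->
  ((p ^ i)%:Z %| a * b)%Z -> ~~ ((p ^ i)%:Z %| b)%Z -> (p%:Z %| a)%Z.
Proof.
rewrite !dvdzE abszM /=; move: `|a|%N `|b|%N => {}a {}b p_pr pab; apply: contraR.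
by rewrite -prime_coprime // => /(coprimeXl i) pa; rewrite -(Gauss_dvdr _ pa).
Qed.

Lemma prime_dvdz_of_exact_dvdz_mul p i (a b : int) : prime p ->
  ((p ^ i)%:Z %| a)%Z -> ~~ ((p ^ i.+1)%:Z %| a)%Z ->
  ((p ^ i.+1)%:Z %| a * b)%Z -> (p%:Z %| b)%Z.
Proof.
rewrite !dvdzE abszM /=; move: `|a|%N `|b|%N => {}a {}b p_pr /divnK aE.
set q := (a %/ p ^ i)%N in aE; have pi_gt0 : (0 < p ^ i)%N by rewrite expn_gt0 prime_gt0.
rewrite -aE expnSr [(q * _)%N]mulnC -mulnA !dvdn_pmul2l // => pNq.
by rewrite Euclid_dvdM // (negbTE pNq).
Qed.

Section InvariantFactorCounts.
Variables (n : nat) (d : 'I_n -> int) (p : nat).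

Let card_setU_le (A B : {set 'I_n}) : (#|A :|: B| <= #|A| + #|B|)%N.
Proof. by rewrite cardsU leq_subr. Qed.

Lemma card_ndvdz_le_e_count i :
  (#|[set k | ~~ ((p ^ i.+1)%:Z %| d k)%Z]| <= \sum_(0 <= j < i.+1) e_count d p j)%N.
Proof.
elim: i => [|i IHi].
  rewrite big_nat1; apply/subset_leq_card/subsetP => k.
  by rewrite !inE expn0 dvd1z.
rewrite big_nat_recr //=; apply: leq_trans (leq_add IHi (leqnn _)).
apply: leq_trans (card_setU_le _ _); apply/subset_leq_card/subsetP => k.
by rewrite !inE; case: ((p ^ i.+1)%:Z %| d k)%Z.
Qed.

Lemma card_dvdz_le_e_count i t :
  (#|[set k | ((p ^ i)%:Z %| d k)%Z]| <=
   \sum_(i <= j < i + t) e_count d p j + #|[set k | ((p ^ (i + t))%:Z %| d k)%Z]|)%N.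
Proof.
elim: t => [|t IHt]; first by rewrite addn0 big_geq.
rewrite addnS big_nat_recr ?leq_addr //= -addnA; apply: leq_trans IHt _.
rewrite leq_add2l; apply: leq_trans (card_setU_le _ _); apply/subset_leq_card.
by apply/subsetP => k; rewrite !inE => ->; case: ((p ^ (i + t).+1)%:Z %| d k)%Z.
Qed.

Hypothesis p_pr : prime p.

Lemma dvdz_exp_e_bound j k :
  (e_bound d <= j)%N -> ((p ^ j)%:Z %| d k)%Z -> d k = 0.
Proof.
move=> le_bj /dvdzP [q dkE]; apply/eqP/negPn/negP => dk_neq0.
have : (p ^ j <= `|d k|)%N.
  by apply: dvdn_leq; [rewrite absz_gt0 | rewrite dkE abszM dvdn_mull].
have : (`|d k| < e_bound d)%N by rewrite ltnS (bigD1 k) //= leq_addr.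
have := ltn_expl j (prime_gt1 p_pr); lia.
Qed.

Lemma card_dvdz_le_zeros_add_e_count i :
  (#|[set k | ((p ^ i)%:Z %| d k)%Z]| <=
   #|[set k | d k == 0]| + \sum_(i <= j < e_bound d) e_count d p j)%N.
Proof.
have dvdz_zero j : (e_bound d <= j)%N ->
    [set k | ((p ^ j)%:Z %| d k)%Z] \subset [set k | d k == 0].
  by move=> le_bj; apply/subsetP => k; rewrite !inE => /(dvdz_exp_e_bound le_bj) ->.
have [le_ib | lt_bi] := leqP i (e_bound d).
  have := card_dvdz_le_e_count i (e_bound d - i); rewrite subnKC // addnC.
  by move/leq_trans; apply; rewrite leq_add2r subset_leq_card ?dvdz_zero.
by rewrite big_geq ?(ltnW lt_bi) // addn0 subset_leq_card ?dvdz_zero ?(ltnW lt_bi).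
Qed.

End InvariantFactorCounts.

(* Two constant rows [c_k 1] and [c_l 1] of [W] give the relation
   [c_l row_k - c_k row_l = 0], nontrivial unless [c_k = 0] or [k = l]. *)
Lemma unitmx_const_rows_eq (R : comUnitRingType) n (W : 'M[R]_n) k l :
  W \in unitmx -> (forall a b, W k a = W k b) -> (forall a b, W l a = W l b) ->
  k = l.
Proof.
move=> Wu Wk Wl; apply/eqP/negPn/negP => neq_kl.
have rowK (v : 'rV_n) : v *m W = 0 -> v = 0.
  by move=> vW0; rewrite -[v](mulmxK Wu) vW0 mul0mx.
pose v : 'rV[R]_n := W l k *: delta_mx 0 k - W k k *: delta_mx 0 l.
have /rowP/(_ l) : v = 0.
  apply: rowK; apply/rowP => j; rewrite mulmxBl -!scalemxAl -!rowE !mxE.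
  by rewrite (Wk j k) (Wl j k) mulrC subrr.
rewrite !mxE eq_sym (negbTE neq_kl) !eqxx mulr0 sub0r /= mulr1.
move=> /eqP; rewrite oppr_eq0 => /eqP Wkk0.
have /rowP/(_ k) : delta_mx 0 k = 0 :> 'rV[R]_n.
  by apply: rowK; apply/rowP => j; rewrite -rowE !mxE (Wk j k) Wkk0.
by rewrite !mxE !eqxx => /eqP; rewrite oner_eq0.
Qed.

Section Laplacian.
Variables (n : nat) (adj : rel 'I_n).
Hypothesis adj_sym : symmetric adj.
Local Notation L := (laplacian adj).
Local Notation A i j := ((adj i j : nat)%:Z).

Lemma laplacian_tr : L^T = L.
Proof.
by apply/matrixP => i j; rewrite !mxE adj_sym eq_sym; case: eqP => // ->.
Qed.

Lemma laplacian_mul_row (u : 'rV[int]_n) j :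
  (u *m L) 0 j = \sum_i A i j * (u 0 j - u 0 i).
Proof.
have degE : (#|[set k | adj j k]|)%:Z = \sum_i A i j.
  rewrite -natz -sumr_const big_mkcond /=; apply: eq_bigr => i _.
  by rewrite inE adj_sym; case: (adj i j).
rewrite !mxE; under eq_bigr do rewrite mxE mulrBr.
rewrite sumrB (bigD1 j) //= eqxx big1 ?addr0 => [|i /negbTE->]; last by rewrite mulr0.
rewrite degE mulr_sumr -sumrB; apply: eq_bigr => i _.
by rewrite mulrBr mulrC [u 0 i * _]mulrC.
Qed.

Lemma laplacian_energy (u : 'rV[int]_n) :
  \sum_j \sum_i A i j * (u 0 j - u 0 i) ^+ 2 = (\sum_j u 0 j * (u *m L) 0 j) *+ 2.
Proof.
have symmetrize : \sum_j \sum_i A i j * (u 0 i * (u 0 i - u 0 j)) =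
                  \sum_j \sum_i A i j * (u 0 j * (u 0 j - u 0 i)).
  by rewrite exchange_big; apply: eq_bigr => j _; apply: eq_bigr => i _; rewrite adj_sym.
transitivity ((\sum_j \sum_i A i j * (u 0 j * (u 0 j - u 0 i))) *+ 2).
  rewrite mulr2n -{2}symmetrize -big_split /=; apply: eq_bigr => j _.
  by rewrite -big_split; apply: eq_bigr => i _ /=; ring.
congr (_ *+ 2); apply: eq_bigr => j _; rewrite laplacian_mul_row mulr_sumr.
by apply: eq_bigr => i _; ring.
Qed.

Hypothesis adj_conn : connected_graph adj.

Lemma laplacian_left_kernel_const (u : 'rV[int]_n) :
  u *m L = 0 -> forall a b, u 0 a = u 0 b.
Proof.
move=> uL0.
have energy0 : \sum_j \sum_i A i j * (u 0 j - u 0 i) ^+ 2 = 0.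
  by rewrite laplacian_energy big1 ?mul0rn // => j _; rewrite uL0 mxE mulr0.
have term_ge0 i j : 0 <= A i j * (u 0 j - u 0 i) ^+ 2 by rewrite mulr_ge0 ?sqr_ge0.
have edge_eq i j : adj i j -> u 0 i = u 0 j.
  move=> adj_ij; move/eqP: energy0.
  rewrite psumr_eq0 => [/allP/(_ j (mem_index_enum j))|]; last by move=> *; exact: sumr_ge0.
  rewrite psumr_eq0 // => /allP/(_ i (mem_index_enum i)).
  by rewrite adj_ij mul1r sqrf_eq0 subr_eq0 => /eqP ->.
move=> a b; have /connectP [s adj_path ->] := adj_conn a b.
elim: s a adj_path => [|c s IHs] a //= /andP [adj_ac adj_path].
by rewrite (edge_eq a c adj_ac) IHs.
Qed.

Lemma Smith_card_zeros_le1 (U V : 'M[int]_n) (d : 'I_n -> int) :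
  U \in unitmx -> V \in unitmx -> U *m L *m V = diag_mx (\row_k d k) ->
  (#|[set k | d k == 0]| <= 1)%N.
Proof.
move=> Uu Vu ULV; apply/card_le1_eqP => k l; rewrite !inE => /eqP dk0 /eqP dl0.
have const_row m : d m = 0 -> forall a b, U m a = U m b.
  move=> dm0 a b; have := @laplacian_left_kernel_const (row m U) _ a b.
  rewrite !mxE; apply; rewrite -[_ *m L](mulmxK Vu) -!row_mul ULV.
  by rewrite row_mul row_diag_mx mxE dm0 scale0r !mul0mx.
exact: unitmx_const_rows_eq Uu (const_row l dl0) (const_row k dk0).
Qed.

End Laplacian.

Theorem lemma2p2 (n : nat) (adj : rel 'I_n) (p : nat) (d : 'I_n -> int)
    (eta : int) :
  simple_graph adj -> connected_graph adj -> prime p ->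
  is_Smith_form (laplacian adj) d ->
  eigenvalue (map_mx (intr : int -> rat) (laplacian adj)) (eta%:~R) ->
  forall i : nat,
    (((p ^ i)%:Z %| eta)%Z ->
       (eig_mult (laplacian adj) eta <=
          1 + \sum_(i <= j < e_bound d) e_count d p j)%N) /\
    (((p ^ i)%:Z %| eta)%Z -> ~~ ((p ^ i.+1)%:Z %| eta)%Z ->
       (eig_mult (laplacian adj) eta <= \sum_(0 <= j < i.+1) e_count d p j)%N).
Proof.
move=> [adj_sym _] adj_conn p_pr [_ [_ [U [V [Uu Vu ULV]]]]] _ i.
set L := laplacian adj.
have [W Wu [Z [W_ker rank_ker]]] := unimodular_left_kernel_basis (L - eta%:M).
have mult_le : (eig_mult L eta <= #|Z|)%N.
  apply: leq_trans (mup_char_poly_le_rank_eigenspace _ _) _.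
    by rewrite map_trmx laplacian_tr.
  by rewrite /eigenspace -map_scalar_mx -map_mxB.
have eig_rel k j : k \in Z -> (W *m invmx U) k j * d j = eta * (W *m V) k j.
  move=> /W_ker; rewrite mulmxBr mul_mx_scalar => /eqP; rewrite subr_eq0 => /eqP W_eig.
  by have := Smith_eigenrow j Uu ULV W_eig; rewrite -!row_mul !mxE.
split => [p_i_eta | p_i_eta p_i1_Neta]; apply: leq_trans mult_le _.
  have zeros_le1 := Smith_card_zeros_le1 adj_sym adj_conn Uu Vu ULV.
  apply: leq_trans _ (leq_add zeros_le1 (leqnn _)).
  apply: leq_trans _ (card_dvdz_le_zeros_add_e_count d p_pr i).
  apply: (card_rows_le_support_modp (W := W *m invmx U) p_pr) => [|r j rZ].
    by rewrite unitmx_mul unitmx_inv Wu Uu.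
  rewrite inE => p_i_Ndj; apply: (prime_dvdz_of_dvdz_mul p_pr _ p_i_Ndj).
  by rewrite eig_rel // dvdz_mulr.
apply: leq_trans (card_ndvdz_le_e_count d p i).
apply: (card_rows_le_support_modp (W := W *m V) p_pr) => [|r j rZ].
  by rewrite unitmx_mul Wu Vu.
rewrite inE negbK => p_i1_dj; apply: (prime_dvdz_of_exact_dvdz_mul p_pr p_i_eta p_i1_Neta).
by rewrite -eig_rel // dvdz_mull.
Qed.
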